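(* Let $f_i:\mathbb{R}^d\to\mathbb{R}$ be twice differentiable, fix $w^t\in\mathbb{R}^d$, and let $g_t=\nabla f_i(w^t)$, $\mathbf{H}_t=\nabla^2 f_i(w^t)$ and $$q(w)=f_i(w^t)+\langle g_t,w-w^t\rangle+\tfrac12\langle \mathbf{H}_t(w-w^t),w-w^t\rangle .$$ Define $$w^{t+1/2}=\arg\min_{w\in\mathbb{R}^d}\tfrac12\|w-w^t\|^2\ \text{ s.t. }\ f_i(w^t)+\langle g_t,w-w^t\rangle=0,$$ $$w^{t+1}=\arg\min_{w\in\mathbb{R}^d}\tfrac12\|w-w^{t+1/2}\|^2\ \text{ s.t. }\ q(w^{t+1/2})+\langle \nabla q(w^{t+1/2}),w-w^{t+1/2}\rangle=0,$$ assuming $g_t\neq 0$ and $\nabla q(w^{t+1/2})\neq 0$. Then $$w^{t+1}=w^t-\frac{f_i(w^t)}{\|g_t\|^2}g_t-\frac12\,\frac{f_i(w^t)^2}{\|g_t\|^4}\,\frac{\langle \mathbf{H}_tg_t,g_t\rangle}{\|v^{t+1}\|^2}\,v^{t+1},\qquad\text{where } v^{t+1}=\left(\mathbf{I}-\mathbf{H}_t\frac{f_i(w^t)}{\|g_t\|^2}\right)g_t .$$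
   Context: This two-step update is called SP2$^+$. Note that $\nabla q(w^{t+1/2})=v^{t+1}$. *)

From HB Require Import structures.
From mathcomp Require Import all_boot all_order all_algebra.
From mathcomp Require Import all_classical all_reals all_analysis.
Set Implicit Arguments. Unset Strict Implicit. Unset Printing Implicit Defensive.
Import Order.TTheory GRing.Theory Num.Theory.
Import numFieldNormedType.Exports.
Local Open Scope ring_scope.

Definition dot (R : realType) (d : nat) (u v : 'cV[R]_d) : R := (u^T *m v) 0 0.

(* Squared Euclidean norm ||v||^2 (NOT the library's max-norm `|v|). *)
Definition sqnorm (R : realType) (d : nat) (v : 'cV[R]_d) : R := dot v v.

Definition is_gradient (R : realType) (d : nat) (f : 'cV[R]_d -> R^o)
  (x gr : 'cV[R]_d) : Prop :=
  differentiable f x /\ forall h, 'd f x h = dot gr h.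

Definition qmodel (R : realType) (d : nat) (fwt : R) (g : 'cV[R]_d)
  (H : 'M[R]_d) (wt : 'cV[R]_d) (w : 'cV[R]_d) : R :=
  fwt + dot g (w - wt) + 2^-1 * dot (H *m (w - wt)) (w - wt).

(* The first step is the Euclidean projection of w^t onto the hyperplane
   {w | f(w^t) + <g, w - w^t> = 0}, namely w^t - (f(w^t)/||g||^2) g.  Since
   grad q(w) = g + H (w - w^t), the gradient at w^{t+1/2} = w^t - c g, with
   c = f(w^t)/||g||^2, is (I - c H) g = v, and because c ||g||^2 = f(w^t) the
   linear part of q cancels: q(w^{t+1/2}) = c^2 <H g, g> / 2.  The second step
   is again a projection onto a hyperplane, this time with normal v, and
   composing the two projections gives the formula. *)
From HB Require Import structures.
From mathcomp Require Import all_boot all_order all_algebra.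
From mathcomp Require Import all_classical all_reals all_analysis.
From mathcomp Require Import ring.
Import Order.TTheory GRing.Theory Num.Theory.
Import numFieldNormedType.Exports.
Local Open Scope ring_scope.

Section InnerProduct.
Context {R : realType} {d : nat}.
Implicit Types u v w : 'cV[R]_d.

Lemma dotE u v : dot u v = \sum_i u i 0 * v i 0.
Proof. by rewrite /dot mxE; apply: eq_bigr => i _; rewrite mxE. Qed.

Lemma dotC u v : dot u v = dot v u.
Proof. by rewrite /dot -[v^T *m u]trmxK trmx_mul trmxK [RHS]mxE. Qed.

Lemma dotDr u v w : dot u (v + w) = dot u v + dot u w.
Proof. by rewrite /dot mulmxDr mxE. Qed.

Lemma dotDl u v w : dot (v + w) u = dot v u + dot w u.
Proof. by rewrite dotC dotDr !(dotC u). Qed.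

Lemma dotZr a u v : dot u (a *: v) = a * dot u v.
Proof. by rewrite /dot -scalemxAr mxE. Qed.

Lemma dotZl a u v : dot (a *: u) v = a * dot u v.
Proof. by rewrite dotC dotZr dotC. Qed.

Lemma dotNr u v : dot u (- v) = - dot u v.
Proof. by rewrite -scaleN1r dotZr mulN1r. Qed.

Lemma dotNl u v : dot (- u) v = - dot u v.
Proof. by rewrite dotC dotNr dotC. Qed.

Lemma dotBl u v w : dot (v - w) u = dot v u - dot w u.
Proof. by rewrite dotDl dotNl. Qed.

Lemma dot_mulmxl (A : 'M[R]_d) u v : dot (A *m u) v = dot u (A^T *m v).
Proof. by rewrite /dot trmx_mul mulmxA. Qed.

Lemma sqnorm_ge0 u : 0 <= sqnorm u.
Proof. by rewrite /sqnorm dotE; apply: sumr_ge0 => i _; rewrite -expr2 sqr_ge0. Qed.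

Lemma sqnorm_eq0 u : (sqnorm u == 0) = (u == 0).
Proof.
apply/idP/eqP => [|->]; last by rewrite /sqnorm dotE big1 // => i _; rewrite mxE mul0r.
rewrite /sqnorm dotE psumr_eq0 => [/allP u0|i _]; last by rewrite -expr2 sqr_ge0.
apply/matrixP => i j; rewrite ord1 mxE.
by have := u0 i (mem_index_enum i); rewrite /= mulf_eq0 orbb => /eqP.
Qed.

Lemma sqnormD u v : sqnorm (u + v) = sqnorm u + 2 * dot u v + sqnorm v.
Proof. by rewrite /sqnorm !dotDl !dotDr (dotC v u); ring. Qed.

Lemma eq_from_dot u v : (forall w, dot u w = dot v w) -> u = v.
Proof.
move=> uv; apply/eqP; rewrite -subr_eq0 -sqnorm_eq0.
by rewrite /sqnorm dotBl uv subrr.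
Qed.

End InnerProduct.

Section HyperplaneProjection.
Variables (R : realType) (d : nat) (a : R) (n p : 'cV[R]_d).
Hypothesis n_neq0 : n != 0.

Definition on_hyperplane (w : 'cV[R]_d) := a + dot n (w - p) = 0.

Definition hyperplane_proj := p - (a / sqnorm n) *: n.

Lemma hyperplane_proj_subp : hyperplane_proj - p = - ((a / sqnorm n) *: n).
Proof. by rewrite /hyperplane_proj addrAC subrr add0r. Qed.

Lemma on_hyperplane_proj : on_hyperplane hyperplane_proj.
Proof.
by rewrite /on_hyperplane hyperplane_proj_subp dotNr dotZr mulfVK ?sqnorm_eq0 ?subrr.
Qed.

Lemma hyperplane_pythagoras w : on_hyperplane w ->
  sqnorm (w - p) = sqnorm (w - hyperplane_proj) + sqnorm (hyperplane_proj - p).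
Proof.
move=> hw; have -> : w - p = (w - hyperplane_proj) + (hyperplane_proj - p).
  by rewrite addrA subrK.
suff dot0 : dot (w - hyperplane_proj) (hyperplane_proj - p) = 0.
  by rewrite sqnormD dot0 mulr0 addr0.
have -> : w - hyperplane_proj = (w - p) + (a / sqnorm n) *: n.
  by rewrite /hyperplane_proj opprD opprK addrA.
have dot_n : dot n (w - p) = - a by apply/eqP; rewrite -addr_eq0 addrC hw.
rewrite hyperplane_proj_subp dotNr dotZr dotDl dotZl (dotC (w - p)) dot_n.
by rewrite -/(sqnorm n) mulfVK ?sqnorm_eq0 // addNr mulr0 oppr0.
Qed.

Lemma hyperplane_argmin x : on_hyperplane x ->
  (forall w, on_hyperplane w -> sqnorm (x - p) <= sqnorm (w - p)) ->
  x = hyperplane_proj.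
Proof.
move=> hx xmin; have := xmin _ on_hyperplane_proj.
rewrite hyperplane_pythagoras // gerDr => le0.
by apply/eqP; rewrite -subr_eq0 -(sqnorm_eq0 (x - _)) eq_le le0 sqnorm_ge0.
Qed.

End HyperplaneProjection.

Section QuadraticModel.
Context {R : realType} {d : nat} {fwt : R} {g wt : 'cV[R]_d} {H : 'M[R]_d}.
Hypothesis H_sym : H^T = H.

Let q := qmodel fwt g H wt.

Lemma qmodel_shift x v (h : R) :
  q (h *: v + x) - q x =
  h * dot (g + H *m (x - wt)) v + h ^+ 2 * (2^-1 * dot (H *m v) v).
Proof.
rewrite /q /qmodel -[h *: v + x - wt]addrA; set u := x - wt; clearbody u.
have Hvu : dot (H *m v) u = dot (H *m u) v by rewrite dot_mulmxl H_sym dotC.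
by rewrite mulmxDr -scalemxAr !dotDl !dotDr !dotZl !dotZr Hvu; field.
Qed.

Lemma derive_qmodel x v : 'D_v q x = dot (g + H *m (x - wt)) v.
Proof.
set A := dot _ v; set B := 2^-1 * dot (H *m v) v.
apply: cvg_lim => //.
have quotientE : {near dnbhs (0 : R), (fun h : R => A + h * B) =1
    (fun h => h^-1 *: ((q \o shift x) (h *: v) - q x) : R^o)}.
  near=> h; have h_neq0 : h != 0 by near: h; exact: nbhs_dnbhs_neq.
  by rewrite /= qmodel_shift -/A -/B /GRing.scale /=; field.
apply: cvg_trans (near_eq_cvg quotientE) _; apply: cvg_within_filter.
have : ((fun h : R => A + h * B) @ (0 : R) --> A + 0 * B)%classic.
  by apply: cvgD; [exact: cvg_cst | exact: cvgMr_tmp cvg_id].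
by rewrite mul0r addr0.
Unshelve. all: by end_near.
Qed.

Lemma is_gradient_qmodel x gr : is_gradient q x gr -> gr = g + H *m (x - wt).
Proof.
move=> [q_diff dqE]; apply: eq_from_dot => v.
by rewrite -dqE -deriveE // derive_qmodel.
Qed.

End QuadraticModel.

Theorem lemma3 (R : realType) (d : nat) (fwt : R) (g : 'cV[R]_d)
  (H : 'M[R]_d) (wt wh w1 gq : 'cV[R]_d) :
  H^T = H ->
  g != 0 ->
  (* w^{t+1/2} = argmin 1/2 ||w - w^t||^2 s.t. f(w^t) + <g_t, w - w^t> = 0 *)
  fwt + dot g (wh - wt) = 0 ->
  (forall w : 'cV[R]_d, fwt + dot g (w - wt) = 0 ->
     2^-1 * sqnorm (wh - wt) <= 2^-1 * sqnorm (w - wt)) ->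
  (* gq = grad q (w^{t+1/2}), assumed nonzero *)
  is_gradient (qmodel fwt g H wt) wh gq ->
  gq != 0 ->
  (* w^{t+1} = argmin 1/2 ||w - w^{t+1/2}||^2
       s.t. q(w^{t+1/2}) + <grad q(w^{t+1/2}), w - w^{t+1/2}> = 0 *)
  qmodel fwt g H wt wh + dot gq (w1 - wh) = 0 ->
  (forall w : 'cV[R]_d, qmodel fwt g H wt wh + dot gq (w - wh) = 0 ->
     2^-1 * sqnorm (w1 - wh) <= 2^-1 * sqnorm (w - wh)) ->
  let v := (1%:M - (fwt / sqnorm g) *: H) *m g in
  w1 = wt - (fwt / sqnorm g) *: g
          - (2^-1 * (fwt ^+ 2 / sqnorm g ^+ 2)
               * (dot (H *m g) g / sqnorm v)) *: v.
Proof.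
move=> H_sym g_neq0 wh_on wh_min gq_grad gq_neq0 w1_on w1_min v.
have half_gt0 : 0 < 2^-1 :> R by rewrite invr_gt0 ltr0n.
set c := fwt / sqnorm g.
have whE : wh = wt - c *: g.
  apply: hyperplane_argmin => // w /wh_min; by rewrite ler_pM2l.
have wh_subwt : wh - wt = - (c *: g) by rewrite whE addrAC subrr add0r.
have gqE : gq = v.
  move: gq_grad => /(is_gradient_qmodel H_sym) ->; rewrite wh_subwt /v.
  by rewrite mulmxBl mul1mx mulmxN -scalemxAr -scalemxAl.
have qwhE : qmodel fwt g H wt wh
             = 2^-1 * (fwt ^+ 2 / sqnorm g ^+ 2) * dot (H *m g) g.
  rewrite /qmodel wh_subwt mulmxN -scalemxAr !(dotNr, dotNl, dotZl, dotZr).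
  by rewrite -/(sqnorm g) /c; field; rewrite sqnorm_eq0.
have -> : w1 = wh - (qmodel fwt g H wt wh / sqnorm gq) *: gq.
  apply: hyperplane_argmin => // w /w1_min; by rewrite ler_pM2l.
by rewrite qwhE gqE -whE -(mulrA _ (dot _ g)).
Qed.
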